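(* For each integer $n\ge 1$, the function $x\mapsto k_n(x)$ is strictly increasing on each of the intervals $[0,1)$ and $(1,+\infty)$: on $[0,1)$ it increases from $k_n(0)=0$ to $+\infty$ (as $x\to 1^-$), and on $(1,+\infty)$ it increases from $-\infty$ (as $x\to1^+$) to $-1$ (as $x\to+\infty$).
   Context: For an integer $n\ge1$, $x\ge 0$, $x\neq 1$, define $H_n(x,0)=\sum_{l=1}^{n}\frac{1-x\cos(2\pi l/n)}{\left(1+x^2-2x\cos(2\pi l/n)\right)^{3/2}}$, and $k_n(x)=\frac1n H_n(x,0)-1$. *)

From Stdlib Require Import Reals.
From Coquelicot Require Import Coquelicot.
Open Scope R_scope.

Definition H (n : nat) (x : R) : R :=
  sum_f 1 n (fun l =>
    let c := cos (2 * PI * INR l / INR n) in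
    (1 - x * c) / Rpower (1 + x ^ 2 - 2 * x * c) (3 / 2)).

Definition k (n : nat) (x : R) : R := H n x / INR n - 1.

From Stdlib Require Import Reals Lra Lia Psatz.
From Coquelicot Require Import Coquelicot.
Open Scope R_scope.

(* Write [q_t(x) = 1 + x^2 - 2 x cos t].  The [l]-th summand of [H_n] is
   [(1 - x cos t) q_t(x)^(-3/2)] at [t = 2 pi l / n]; it equals
   [d/dx (x q_t(x)^(-1/2))] for [x < 1] and [- y^2 d/dy q_t(y)^(-1/2)] at
   [y = 1/x] for [x > 1].  Now [q_t(x)^(-1/2) = |F_t(x)|^2] with
   [F_t(x) = (1 - x e^(it))^(-1/2) = sum_j alpha_j x^j e^(ijt)],
   [alpha_j = C(2j, j) / 4^j]; this is proved without complex numbers, as [F_t]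
   solves [(1 - x e^(it)) F' = e^(it) F / 2], so that [|F_t|^4 q_t] is constant.
   Splitting [F_t] according to the residue of [j] mod [n] and using the
   orthogonality of the characters of [Z/n] gives
   [sum_l q_(2 pi l/n)(x)^(-1/2) = n sum_r G_r(x)^2] where
   [G_r = sum_(j = r mod n) alpha_j x^j] has nonnegative coefficients.  Hence
   [H_n(x) = n sum_r (G_r^2 + 2 x G_r G_r')(x)] on [[0, 1)] and
   [H_n(x) = - 2 n y^2 sum_r (G_r G_r')(y)] on [(1, oo)], both visibly
   increasing in [x].  The limits come from the summand [l = n], which is
   [+- 1/(x - 1)^2], the other summands being nonnegative for [x < 1], bounded
   above for [x > 1], and all of them [O(1/(x - 1)^2)] at infinity. *)

Lemma sum_f_R0_telescope (F : nat -> R) m :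
  sum_f_R0 (fun k => F (S k) - F k) m = F (S m) - F O.
Proof. induction m as [|m IH]; simpl; [|rewrite IH]; ring. Qed.

Lemma sum_f_R0_indicator (w : nat -> R) k v m : (k <= m)%nat ->
  sum_f_R0 (fun r => w r * (if Nat.eqb k r then v else 0)) m = w k * v.
Proof.
  induction m as [|m IH]; intros Hk.
  - replace k with O by lia. simpl. reflexivity.
  - rewrite tech5. destruct (Nat.eq_dec k (S m)) as [->|Hne].
    + rewrite Nat.eqb_refl, sum_eq_R0; [ring|].
      intros r Hr. rewrite (proj2 (Nat.eqb_neq _ _)) by lia. ring.
    + rewrite IH, (proj2 (Nat.eqb_neq _ _)) by lia. ring.
Qed.

Lemma sum_f_R0_mul (X Y : nat -> R) m p :
  sum_f_R0 X m * sum_f_R0 Y p = sum_f_R0 (fun r => sum_f_R0 (fun s => X r * Y s) p) m.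
Proof.
  rewrite Rmult_comm, scal_sum. apply sum_eq. intros r _.
  rewrite scal_sum. apply sum_eq. intros; ring.
Qed.

Lemma sum_f_R0_swap (u : nat -> nat -> R) m p :
  sum_f_R0 (fun i => sum_f_R0 (u i) p) m = sum_f_R0 (fun j => sum_f_R0 (fun i => u i j) m) p.
Proof.
  induction p as [|p IH]; [reflexivity|].
  rewrite tech5, <- IH, <- plus_sum. apply sum_eq. intros; apply tech5.
Qed.

Lemma sum_f_R0_mult_l (a : nat -> R) c m :
  sum_f_R0 (fun k => c * a k) m = c * sum_f_R0 a m.
Proof. rewrite scal_sum. apply sum_eq; intros; ring. Qed.

Lemma sum_f_R0_lin (a b : nat -> R) c m :
  sum_f_R0 (fun k => a k + c * b k) m = sum_f_R0 a m + c * sum_f_R0 b m.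
Proof. rewrite plus_sum, sum_f_R0_mult_l. reflexivity. Qed.

Lemma sum_f_R0_ge_first (a : nat -> R) m : (forall k, 0 <= a k) -> a O <= sum_f_R0 a m.
Proof. intros Ha. induction m as [|m IH]; simpl; [lra|]. pose proof (Ha (S m)). lra. Qed.

Lemma sum_f_R0_le_but_last (a b : nat -> R) m : (forall k, (k < m)%nat -> a k <= b k) ->
  sum_f_R0 a m - a m <= sum_f_R0 b m - b m.
Proof.
  intros Hab. destruct m as [|m]; simpl; [lra|].
  assert (sum_f_R0 a m <= sum_f_R0 b m) by (apply sum_Rle; intros; apply Hab; lia).
  lra.
Qed.

Lemma CV_radius_gt_of_bounded (a : nat -> R) M x :
  (forall j, Rabs (a j) <= M) -> Rabs x < 1 -> Rbar_lt (Rabs x) (CV_radius a).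
Proof.
  intros Ha Hx.
  set (r := (Rabs x + 1) / 2).
  assert (Hr : 0 <= r < 1) by (pose proof (Rabs_pos x); unfold r; lra).
  assert (Hle : Rbar_le r (CV_radius a)).
  { apply (proj1 (CV_radius_bounded a)). exists M. intros j.
    rewrite Rabs_mult, <- RPow_abs, (Rabs_pos_eq r) by lra.
    assert (0 <= r ^ j <= 1).
    { split; [apply pow_le; lra|]. rewrite <- (pow1 j). apply pow_incr; lra. }
    pose proof (Ha j); pose proof (Rabs_pos (a j)); nra. }
  eapply Rbar_lt_le_trans; [|exact Hle]. simpl; unfold r; lra.
Qed.

Lemma ex_pseries_lin (a b : nat -> R) p q x :
  ex_pseries a x -> ex_pseries b x -> ex_pseries (fun k => p * a k + q * b k) x.
Proof.
  intros Ha Hb.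
  apply ex_pseries_ext with (PS_plus (PS_scal p a) (PS_scal q b)); [reflexivity|].
  apply ex_pseries_plus; apply ex_pseries_scal; auto; apply Rmult_comm.
Qed.

Lemma PSeries_lin (a b : nat -> R) p q x :
  ex_pseries a x -> ex_pseries b x ->
  PSeries (fun k => p * a k + q * b k) x = p * PSeries a x + q * PSeries b x.
Proof.
  intros Ha Hb.
  rewrite <- (PSeries_scal p), <- (PSeries_scal q), <- PSeries_plus.
  - apply PSeries_ext; reflexivity.
  - apply ex_pseries_scal; auto; apply Rmult_comm.
  - apply ex_pseries_scal; auto; apply Rmult_comm.
Qed.

Lemma PSeries_index_mul (a : nat -> R) x :
  PSeries (fun k => INR k * a k) x = x * PSeries (PS_derive a) x.
Proof.
  rewrite <- PSeries_incr_1. apply PSeries_ext.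
  intros [|k]; unfold PS_incr_1, PS_derive; simpl; [unfold zero; simpl; ring | reflexivity].
Qed.

Lemma ex_pseries_index_mul (a : nat -> R) x :
  Rbar_lt (Rabs x) (CV_radius a) -> ex_pseries (fun k => INR k * a k) x.
Proof.
  intros Hx.
  apply ex_pseries_ext with (PS_incr_1 (PS_derive a)).
  - intros [|k]; unfold PS_incr_1, PS_derive; simpl; [unfold zero; simpl; ring | reflexivity].
  - apply ex_pseries_incr_1, ex_pseries_derive, Hx.
Qed.

(* One real component of: if [(k+1) c_(k+1) = (k + 1/2) w c_k] then [F' = w (x F' + F / 2)]. *)
Lemma PSeries_derive_of_rec (a b : nat -> R) p q x :
  (forall k, INR (S k) * a (S k) = (INR k + / 2) * (p * a k + q * b k)) ->
  Rbar_lt (Rabs x) (CV_radius a) -> Rbar_lt (Rabs x) (CV_radius b) ->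
  PSeries (PS_derive a) x
  = p * (x * PSeries (PS_derive a) x + PSeries a x / 2)
  + q * (x * PSeries (PS_derive b) x + PSeries b x / 2).
Proof.
  intros Hrec Ha Hb.
  assert (Hlin : forall c, Rbar_lt (Rabs x) (CV_radius c) ->
    x * PSeries (PS_derive c) x + PSeries c x / 2
    = PSeries (fun k => 1 * (INR k * c k) + / 2 * c k) x).
  { intros c Hc. rewrite PSeries_lin, PSeries_index_mul.
    - unfold Rdiv; ring.
    - apply ex_pseries_index_mul, Hc.
    - apply CV_radius_inside, Hc. }
  assert (Hex : forall c, Rbar_lt (Rabs x) (CV_radius c) ->
    ex_pseries (fun k => 1 * (INR k * c k) + / 2 * c k) x).
  { intros c Hc. apply ex_pseries_lin;
      [apply ex_pseries_index_mul | apply CV_radius_inside]; exact Hc. }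
  rewrite (Hlin a Ha), (Hlin b Hb), <- PSeries_lin by auto.
  apply PSeries_ext; intros k. unfold PS_derive. rewrite Hrec. ring.
Qed.

Lemma is_pseries_sum (c : nat -> R) (b : nat -> nat -> R) m x :
  (forall r, ex_pseries (b r) x) ->
  is_pseries (fun k => sum_f_R0 (fun r => c r * b r k) m) x
    (sum_f_R0 (fun r => c r * PSeries (b r) x) m).
Proof.
  intros Hb. induction m as [|m IH].
  - exact (is_pseries_scal _ _ _ _ (Rmult_comm _ _) (PSeries_correct _ _ (Hb O))).
  - exact (is_pseries_plus _ _ _ _ _ IH
      (is_pseries_scal _ _ _ _ (Rmult_comm _ _) (PSeries_correct _ _ (Hb (S m))))).
Qed.

Lemma PSeries_ge_term (a : nat -> R) x j :
  (forall k, 0 <= a k) -> 0 <= x -> ex_pseries a x -> a j * x ^ j <= PSeries a x.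
Proof.
  intros Ha Hx Hex.
  assert (Hnn : forall k, 0 <= a k * x ^ k) by (intros; apply Rmult_le_pos; auto using pow_le).
  apply Rle_trans with (sum_f_R0 (fun k => a k * x ^ k) j).
  - destruct j as [|j]; simpl; [lra|]. pose proof (cond_pos_sum _ j Hnn). lra.
  - apply sum_incr; [|exact Hnn].
    apply is_series_Reals, is_pseries_R, PSeries_correct, Hex.
Qed.

Lemma PSeries_le_of_nonneg (a : nat -> R) x y :
  (forall k, 0 <= a k) -> 0 <= x <= y -> ex_pseries a y -> PSeries a x <= PSeries a y.
Proof.
  intros Ha Hxy Hex. apply Series_le; [|apply ex_pseries_R, Hex].
  intros k. split.
  - apply Rmult_le_pos; [apply Ha | apply pow_le; lra].
  - apply Rmult_le_compat_l; [apply Ha | apply pow_incr; lra].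
Qed.

Lemma PSeries_nonneg (a : nat -> R) x :
  (forall k, 0 <= a k) -> 0 <= x -> ex_pseries a x -> 0 <= PSeries a x.
Proof.
  intros Ha Hx Hex. eapply Rle_trans; [|apply (PSeries_ge_term a x O); auto].
  simpl. rewrite Rmult_1_r. apply Ha.
Qed.

Lemma is_derive_zero_const (f : R -> R) r x :
  (forall y, Rabs y < r -> is_derive f y 0) -> Rabs x < r -> f x = f 0.
Proof.
  intros Hd Hx.
  assert (Hin : forall z, Rmin 0 x <= z <= Rmax 0 x -> Rabs z < r).
  { intros z Hz. apply Rabs_def2 in Hx. apply Rabs_def1.
    - apply Rle_lt_trans with (Rmax 0 x); [lra|]. apply Rmax_lub_lt; lra.
    - apply Rlt_le_trans with (Rmin 0 x); [|lra]. apply Rmin_glb_lt; lra. }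
  destruct (MVT_gen f 0 x (fun _ => 0)) as [z [_ Hz]].
  - intros z Hz. apply Hd, Hin. lra.
  - intros z Hz. apply continuity_pt_filterlim, (ex_derive_continuous f z).
    eexists. apply Hd, Hin, Hz.
  - lra.
Qed.

Lemma Rpower_3_2 a : 0 < a -> Rpower a (3 / 2) = a * sqrt a.
Proof.
  intros Ha. replace (3 / 2) with (1 + / 2) by field.
  rewrite Rpower_plus, Rpower_1, Rpower_sqrt; auto.
Qed.

Lemma filterlim_inv_sqr c b a : 0 < c ->
  filterlim (fun x => / (x - a) ^ 2 / c - b) (locally' a) (Rbar_locally p_infty).
Proof.
  intros Hc P [M HM].
  set (R1 := Rabs (M + b) + 1).
  assert (HR : M + b < R1 /\ 0 < R1)
    by (pose proof (Rle_abs (M + b)); pose proof (Rabs_pos (M + b)); unfold R1; lra).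
  assert (Hd : 0 < Rmin 1 (/ (c * R1))) by (apply Rmin_glb_lt; [lra | apply Rinv_0_lt_compat; nra]).
  exists (mkposreal _ Hd). intros x Hx Hxa. apply HM.
  change (Rabs (x - a) < Rmin 1 (/ (c * R1))) in Hx.
  pose proof (Rmin_l 1 (/ (c * R1))). pose proof (Rmin_r 1 (/ (c * R1))).
  assert (Hpos : 0 < Rabs (x - a)) by (apply Rabs_pos_lt; lra).
  set (q := (x - a) ^ 2 * c).
  assert (Hq : 0 < q /\ q * R1 < 1).
  { unfold q. rewrite <- pow2_abs. split; [apply Rmult_lt_0_compat; nra|].
    assert (Rabs (x - a) ^ 2 < / (c * R1)) by nra.
    rewrite Rmult_assoc. apply Rlt_le_trans with (/ (c * R1) * (c * R1)).
    - apply Rmult_lt_compat_r; nra.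
    - rewrite Rinv_l; nra. }
  replace (/ (x - a) ^ 2 / c) with (/ q) by (unfold q; field; split; try lra; apply pow_nonzero; lra).
  assert (q * / q = 1) by (field; lra).
  nra.
Qed.

Lemma filter_le_within_locally' (D : R -> Prop) a : (forall y, D y -> y <> a) ->
  filter_le (within D (locally a)) (locally' a).
Proof. intros HD P [d Hd]. exists d. intros y Hy Hya. apply Hd; [exact Hy | apply HD, Hya]. Qed.

Lemma filterlim_p_infty_of_inv_sqr_bound (f : R -> R) l :
  (forall x, 1 < x -> Rabs (f x - l) <= / (x - 1) ^ 2) ->
  filterlim f (Rbar_locally p_infty) (locally l).
Proof.
  intros Hf P [eps HP]. pose proof (cond_pos eps) as He.
  exists (2 + / eps). intros x Hx. apply HP.
  assert (Hie : 0 < / eps) by (apply Rinv_0_lt_compat, He).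
  change (Rabs (f x - l) < eps).
  eapply Rle_lt_trans; [apply Hf; lra|].
  rewrite <- (Rinv_inv eps). apply Rinv_lt_contravar; [apply Rmult_lt_0_compat; [|apply pow_lt]; lra|].
  nra.
Qed.

(** * The series [(1 - x e^(it))^(-1/2)] *)

(* [alpha j = C(2j, j) / 4^j], the Taylor coefficients of [(1 - z)^(-1/2)]. *)
Fixpoint alpha (j : nat) : R :=
  match j with
  | O => 1
  | S j => alpha j * (2 * INR j + 1) / (2 * INR j + 2)
  end.

Lemma alpha_bounds j : 0 < alpha j <= 1.
Proof.
  induction j as [|j IH]; simpl; [lra|].
  assert (0 <= INR j) by apply pos_INR.
  split.
  - apply Rdiv_lt_0_compat; nra.
  - apply Rmult_le_reg_r with (2 * INR j + 2); [lra|].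
    unfold Rdiv; rewrite Rmult_assoc, Rinv_l; nra.
Qed.

Lemma alpha_S j : INR (S j) * alpha (S j) = (INR j + / 2) * alpha j.
Proof.
  simpl alpha; rewrite S_INR.
  assert (0 <= INR j) by apply pos_INR.
  field; lra.
Qed.

Definition cos_coef (t : R) (j : nat) : R := alpha j * cos (INR j * t).
Definition sin_coef (t : R) (j : nat) : R := alpha j * sin (INR j * t).

(* [ReF t x + i ImF t x = sum_j alpha j x^j e^(ijt) = (1 - x e^(it))^(-1/2)]. *)
Definition ReF (t x : R) : R := PSeries (cos_coef t) x.
Definition ImF (t x : R) : R := PSeries (sin_coef t) x.
Definition ReF' (t x : R) : R := PSeries (PS_derive (cos_coef t)) x.
Definition ImF' (t x : R) : R := PSeries (PS_derive (sin_coef t)) x.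

Lemma CV_radius_alpha_trig (tr : R -> R) t x :
  (forall z, Rabs (tr z) <= 1) -> Rabs x < 1 ->
  Rbar_lt (Rabs x) (CV_radius (fun j => alpha j * tr (INR j * t))).
Proof.
  intros Htr Hx. apply (CV_radius_gt_of_bounded _ 1); auto.
  intros j. rewrite Rabs_mult, (Rabs_pos_eq (alpha j)) by (apply Rlt_le, alpha_bounds).
  pose proof (alpha_bounds j); pose proof (Htr (INR j * t)); pose proof (Rabs_pos (tr (INR j * t))).
  nra.
Qed.

Lemma CV_radius_cos_coef t x : Rabs x < 1 -> Rbar_lt (Rabs x) (CV_radius (cos_coef t)).
Proof. apply CV_radius_alpha_trig. intros z; apply Rabs_le, COS_bound. Qed.

Lemma CV_radius_sin_coef t x : Rabs x < 1 -> Rbar_lt (Rabs x) (CV_radius (sin_coef t)).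
Proof. apply CV_radius_alpha_trig. intros z; apply Rabs_le, SIN_bound. Qed.

Lemma ReF'_eq t x : Rabs x < 1 ->
  ReF' t x = cos t * (x * ReF' t x + ReF t x / 2) - sin t * (x * ImF' t x + ImF t x / 2).
Proof.
  intros Hx. unfold ReF', ReF, ImF', ImF.
  rewrite (PSeries_derive_of_rec (cos_coef t) (sin_coef t) (cos t) (- sin t) x) at 1.
  - ring.
  - intros k. unfold cos_coef, sin_coef.
    replace (INR (S k) * t) with (INR k * t + t) by (rewrite S_INR; ring).
    rewrite <- Rmult_assoc, alpha_S, cos_plus. ring.
  - apply CV_radius_cos_coef, Hx.
  - apply CV_radius_sin_coef, Hx.
Qed.

Lemma ImF'_eq t x : Rabs x < 1 ->
  ImF' t x = sin t * (x * ReF' t x + ReF t x / 2) + cos t * (x * ImF' t x + ImF t x / 2).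
Proof.
  intros Hx. unfold ReF', ReF, ImF', ImF.
  rewrite (PSeries_derive_of_rec (sin_coef t) (cos_coef t) (cos t) (sin t) x) at 1.
  - ring.
  - intros k. unfold cos_coef, sin_coef.
    replace (INR (S k) * t) with (INR k * t + t) by (rewrite S_INR; ring).
    rewrite <- Rmult_assoc, alpha_S, sin_plus. ring.
  - apply CV_radius_sin_coef, Hx.
  - apply CV_radius_cos_coef, Hx.
Qed.

(* [qd (cos t) x = |1 - x e^(it)|^2]. *)
Definition qd (c x : R) : R := 1 + x ^ 2 - 2 * x * c.

(* The real part of [conj F * (1 - x e^(-it)) * ((1 - x e^(it)) F' - e^(it) F / 2) = 0]. *)
Lemma qd_mul_normF_deriv t x : Rabs x < 1 ->
  qd (cos t) x * (ReF t x * ReF' t x + ImF t x * ImF' t x)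
  = (ReF t x ^ 2 + ImF t x ^ 2) * (cos t - x) / 2.
Proof.
  intros Hx. unfold qd.
  pose proof (ReF'_eq t x Hx) as E1. pose proof (ImF'_eq t x Hx) as E2.
  pose proof (sin2_cos2 t) as W. unfold Rsqr in W.
  set (a := ReF t x) in *. set (b := ImF t x) in *.
  set (a' := ReF' t x) in *. set (b' := ImF' t x) in *.
  set (c := cos t) in *. set (s := sin t) in *.
  set (L1 := a' - (c * (x * a' + a / 2) - s * (x * b' + b / 2))).
  set (L2 := b' - (s * (x * a' + a / 2) + c * (x * b' + b / 2))).
  assert (HL1 : L1 = 0) by (unfold L1; lra).
  assert (HL2 : L2 = 0) by (unfold L2; lra).
  assert (HW : s * s + c * c - 1 = 0) by lra.
  replace ((1 + x ^ 2 - 2 * x * c) * (a * a' + b * b')) with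
    ((a ^ 2 + b ^ 2) * (c - x) / 2
     + a * ((1 - x * c) * L1 - x * s * L2) + b * (x * s * L1 + (1 - x * c) * L2)
     - (s * s + c * c - 1) * (x ^ 2 * (a * a' + b * b') + x * (a ^ 2 + b ^ 2) / 2))
    by (unfold L1, L2; field).
  rewrite HL1, HL2, HW. ring.
Qed.

Lemma normF_sqr_mul_qd t x : Rabs x < 1 ->
  (ReF t x ^ 2 + ImF t x ^ 2) ^ 2 * qd (cos t) x = 1.
Proof.
  intros Hx.
  set (phi := fun y => (ReF t y ^ 2 + ImF t y ^ 2) ^ 2 * qd (cos t) y).
  change (phi x = 1).
  assert (Hphi0 : phi 0 = 1).
  { unfold phi, ReF, ImF, qd. rewrite !PSeries_0. unfold cos_coef, sin_coef. simpl.
    rewrite Rmult_0_l, cos_0, sin_0. ring. }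
  rewrite <- Hphi0. apply (is_derive_zero_const phi 1); auto.
  intros y Hy.
  assert (HA : is_derive (ReF t) y (ReF' t y))
    by exact (is_derive_PSeries _ _ (CV_radius_cos_coef t y Hy)).
  assert (HB : is_derive (ImF t) y (ImF' t y))
    by exact (is_derive_PSeries _ _ (CV_radius_sin_coef t y Hy)).
  pose proof (qd_mul_normF_deriv t y Hy) as Hk. unfold qd in Hk.
  unfold phi, qd. auto_derive.
  - repeat split; eexists; eauto.
  - change (fun z => ReF t z) with (ReF t). change (fun z => ImF t z) with (ImF t).
    rewrite (is_derive_unique _ _ _ HA), (is_derive_unique _ _ _ HB). nra.
Qed.

Definition hterm (c x : R) : R := (1 - x * c) / Rpower (qd c x) (3 / 2).

Lemma qd_ge c x : -1 <= c <= 1 -> (1 - Rabs x) ^ 2 <= qd c x.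
Proof.
  intros Hc. unfold qd.
  destruct (Rle_dec 0 x).
  - rewrite Rabs_pos_eq by lra. nra.
  - rewrite Rabs_left by lra. nra.
Qed.

Lemma qd_pos c x : -1 <= c <= 1 -> Rabs x < 1 -> 0 < qd c x.
Proof.
  intros Hc Hx. eapply Rlt_le_trans; [|apply qd_ge, Hc].
  apply pow_lt; lra.
Qed.

Lemma normF_sqr_eq t x : Rabs x < 1 ->
  ReF t x ^ 2 + ImF t x ^ 2 = / sqrt (qd (cos t) x).
Proof.
  intros Hx.
  pose proof (qd_pos (cos t) x (COS_bound t) Hx) as Hq.
  pose proof (normF_sqr_mul_qd t x Hx) as H1.
  set (q := qd (cos t) x) in *. set (u := ReF t x ^ 2 + ImF t x ^ 2) in *.
  assert (Hu : 0 <= u) by (unfold u; nra).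
  pose proof (sqrt_lt_R0 q Hq). pose proof (sqrt_sqrt q (Rlt_le _ _ Hq)).
  assert (Hsu : sqrt q * u = 1).
  { assert ((sqrt q * u) ^ 2 = 1) by (replace ((sqrt q * u) ^ 2) with (sqrt q * sqrt q * u ^ 2) by ring; nra).
    assert (0 <= sqrt q * u) by nra. nra. }
  apply (Rmult_eq_reg_l (sqrt q)); [|lra]. rewrite Hsu. field. lra.
Qed.

Lemma hterm_lt1 t x : Rabs x < 1 ->
  hterm (cos t) x
  = (ReF t x ^ 2 + ImF t x ^ 2) + 2 * x * (ReF t x * ReF' t x + ImF t x * ImF' t x).
Proof.
  intros Hx. unfold hterm.
  pose proof (qd_pos (cos t) x (COS_bound t) Hx) as Hq.
  pose proof (sqrt_lt_R0 _ Hq).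
  pose proof (qd_mul_normF_deriv t x Hx) as HK. rewrite normF_sqr_eq in * by exact Hx.
  rewrite Rpower_3_2 by exact Hq.
  set (K := ReF t x * ReF' t x + ImF t x * ImF' t x) in *.
  replace K with ((cos t - x) / (2 * qd (cos t) x * sqrt (qd (cos t) x)))
    by (apply (Rmult_eq_reg_l (qd (cos t) x)); [rewrite HK; field|]; lra).
  replace (1 - x * cos t) with (qd (cos t) x - x ^ 2 + x * cos t) by (unfold qd; ring).
  field. lra.
Qed.

Lemma hterm_gt1 t x : 1 < x ->
  hterm (cos t) x
  = - 2 * (/ x) ^ 2 * (ReF t (/ x) * ReF' t (/ x) + ImF t (/ x) * ImF' t (/ x)).
Proof.
  intros Hx. set (y := / x).
  assert (Hy : 0 < y < 1).
  { unfold y. split; [apply Rinv_0_lt_compat; lra|].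
    rewrite <- Rinv_1. apply Rinv_lt_contravar; lra. }
  assert (Hay : Rabs y < 1) by (rewrite Rabs_pos_eq; lra).
  assert (Hxy : x = / y) by (unfold y; rewrite Rinv_inv; auto).
  pose proof (qd_pos (cos t) y (COS_bound t) Hay) as Hq.
  pose proof (sqrt_lt_R0 _ Hq).
  pose proof (qd_mul_normF_deriv t y Hay) as HK. rewrite normF_sqr_eq in HK by exact Hay.
  assert (Hqx : qd (cos t) x = qd (cos t) y / y ^ 2) by (rewrite Hxy; unfold qd; field; lra).
  unfold hterm. rewrite Hqx.
  rewrite Rpower_3_2 by (apply Rdiv_lt_0_compat; [lra | apply pow_lt; lra]).
  rewrite sqrt_div_alt by (apply pow_lt; lra).
  replace (y ^ 2) with (Rsqr y) by (unfold Rsqr; ring). rewrite sqrt_Rsqr by lra.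
  set (K := ReF t y * ReF' t y + ImF t y * ImF' t y) in *.
  replace K with ((cos t - y) / (2 * qd (cos t) y * sqrt (qd (cos t) y)))
    by (apply (Rmult_eq_reg_l (qd (cos t) y)); [rewrite HK; field|]; lra).
  rewrite Hxy. unfold Rsqr. field. repeat split; lra.
Qed.

(** * Orthogonality at the [n]-th roots of unity *)

Definition theta (n l : nat) : R := 2 * PI * INR l / INR n.

Lemma sum_cos_theta n d : (0 < d < n)%nat ->
  sum_f_R0 (fun l => cos (INR d * theta n (S l))) (n - 1) = 0.
Proof.
  intros Hd.
  assert (Hn : 0 < INR n) by (apply lt_0_INR; lia).
  assert (Hdn : 0 < INR d < INR n) by (split; [apply lt_0_INR | apply lt_INR]; lia).
  set (a := 2 * PI * INR d / INR n).
  assert (Ha : 0 < a / 2 < PI).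
  { pose proof PI_RGT_0. unfold a. split.
    - apply Rmult_lt_0_compat; [|lra]. apply Rdiv_lt_0_compat; nra.
    - apply Rmult_lt_reg_r with (INR n); auto. unfold Rdiv. field_simplify; nra. }
  pose proof (sin_gt_0 _ (proj1 Ha) (proj2 Ha)) as Hs.
  set (F := fun m : nat => sin (INR m * a + a / 2)).
  (* [2 sin(a/2) cos(m a) = sin((m + 1/2) a) - sin((m - 1/2) a)] *)
  assert (E : forall l, cos (INR d * theta n (S l)) * (2 * sin (a / 2)) = F (S l) - F l).
  { intros l. unfold F.
    replace (INR d * theta n (S l)) with (INR (S l) * a) by (unfold theta, a; field; lra).
    replace (INR l * a + a / 2) with (INR (S l) * a - a / 2) by (rewrite S_INR; lra).
    rewrite sin_plus, sin_minus. ring. }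
  apply (Rmult_eq_reg_l (2 * sin (a / 2))); [|lra].
  rewrite scal_sum, (sum_eq _ (fun l => F (S l) - F l)) by (intros; apply E).
  rewrite sum_f_R0_telescope. unfold F. replace (S (n - 1)) with n by lia. simpl INR at 2.
  replace (INR n * a + a / 2) with (a / 2 + 2 * INR d * PI) by (unfold a; field; lra).
  rewrite sin_period, Rmult_0_l, Rplus_0_l. ring.
Qed.

Lemma sum_cos_diff_theta n r s : (1 <= n)%nat -> (r < n)%nat -> (s < n)%nat ->
  sum_f_R0 (fun l => cos (INR r * theta n (S l) - INR s * theta n (S l))) (n - 1)
  = if Nat.eqb r s then INR n else 0.
Proof.
  intros Hn Hr Hs. destruct (Nat.eqb_spec r s) as [<-|Hrs].
  - rewrite (sum_eq _ (fun _ => 1)) by (intros; rewrite Rminus_diag, cos_0; reflexivity).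
    rewrite sum_cte. replace (S (n - 1)) with n by lia. ring.
  - destruct (Nat.lt_ge_cases s r).
    + rewrite <- (sum_cos_theta n (r - s)) by lia. apply sum_eq. intros l _.
      rewrite minus_INR by lia. f_equal. ring.
    + rewrite <- (sum_cos_theta n (s - r)) by lia. apply sum_eq. intros l _.
      rewrite minus_INR by lia. rewrite <- cos_neg. f_equal. ring.
Qed.

Lemma parseval_theta n (g d : nat -> R) : (1 <= n)%nat ->
  sum_f_R0 (fun l =>
      sum_f_R0 (fun r => cos (INR r * theta n (S l)) * g r) (n - 1)
    * sum_f_R0 (fun s => cos (INR s * theta n (S l)) * d s) (n - 1)
    + sum_f_R0 (fun r => sin (INR r * theta n (S l)) * g r) (n - 1)
    * sum_f_R0 (fun s => sin (INR s * theta n (S l)) * d s) (n - 1)) (n - 1)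
  = INR n * sum_f_R0 (fun r => g r * d r) (n - 1).
Proof.
  intros Hn.
  rewrite (sum_eq _ (fun l => sum_f_R0 (fun r => sum_f_R0 (fun s =>
      g r * d s * cos (INR r * theta n (S l) - INR s * theta n (S l))) (n - 1)) (n - 1))).
  2:{ intros l _. rewrite !sum_f_R0_mul, <- plus_sum. apply sum_eq. intros r _.
      rewrite <- plus_sum. apply sum_eq. intros s _. rewrite cos_minus. ring. }
  rewrite sum_f_R0_swap, scal_sum. apply sum_eq. intros r Hr.
  rewrite sum_f_R0_swap.
  rewrite (sum_eq _ (fun s => g r * d s * (if Nat.eqb r s then INR n else 0))).
  - rewrite (sum_f_R0_indicator (fun s => g r * d s)) by lia. ring.
  - intros s Hs. rewrite <- sum_cos_diff_theta by lia. rewrite scal_sum.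
    apply sum_eq; intros; ring.
Qed.

(** * Splitting by residues mod [n] *)

Definition alpha_mod (n r j : nat) : R := if Nat.eqb (j mod n) r then alpha j else 0.
Definition Gres (n r : nat) (x : R) : R := PSeries (alpha_mod n r) x.
Definition Gres' (n r : nat) (x : R) : R := PSeries (PS_derive (alpha_mod n r)) x.

Lemma alpha_mod_bounds n r j : 0 <= alpha_mod n r j <= 1.
Proof. unfold alpha_mod. destruct (Nat.eqb _ _); [pose proof (alpha_bounds j)|]; lra. Qed.

Lemma CV_radius_alpha_mod n r x : Rabs x < 1 -> Rbar_lt (Rabs x) (CV_radius (alpha_mod n r)).
Proof.
  apply (CV_radius_gt_of_bounded _ 1). intros j.
  pose proof (alpha_mod_bounds n r j). rewrite Rabs_pos_eq; lra.
Qed.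

Section TrigSplit.

Variable tr : R -> R.
Hypothesis tr_period : forall z k, tr (z + 2 * INR k * PI) = tr z.

Lemma alpha_trig_split n l j : (1 <= n)%nat ->
  alpha j * tr (INR j * theta n l)
  = sum_f_R0 (fun r => tr (INR r * theta n l) * alpha_mod n r j) (n - 1).
Proof.
  intros Hn. assert (Hn0 : 0 < INR n) by (apply lt_0_INR; lia).
  unfold alpha_mod.
  rewrite (sum_f_R0_indicator (fun r => tr (INR r * theta n l))) by (pose proof (Nat.mod_upper_bound j n); lia).
  rewrite Rmult_comm. f_equal.
  rewrite <- (tr_period (INR (j mod n) * theta n l) (l * (j / n))%nat). f_equal.
  rewrite (Nat.div_mod_eq j n) at 1. rewrite plus_INR, !mult_INR. unfold theta. field. lra.
Qed.

Lemma PSeries_alpha_trig n l x : (1 <= n)%nat -> Rabs x < 1 ->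
  PSeries (fun j => alpha j * tr (INR j * theta n l)) x
  = sum_f_R0 (fun r => tr (INR r * theta n l) * Gres n r x) (n - 1).
Proof.
  intros Hn Hx.
  rewrite (PSeries_ext _ _ _ (fun j => alpha_trig_split n l j Hn)).
  apply is_pseries_unique, is_pseries_sum.
  intros r. apply CV_radius_inside, CV_radius_alpha_mod, Hx.
Qed.

Lemma PSeries_derive_alpha_trig n l x : (1 <= n)%nat -> Rabs x < 1 ->
  PSeries (PS_derive (fun j => alpha j * tr (INR j * theta n l))) x
  = sum_f_R0 (fun r => tr (INR r * theta n l) * Gres' n r x) (n - 1).
Proof.
  intros Hn Hx.
  rewrite (PSeries_ext _
    (fun k => sum_f_R0 (fun r => tr (INR r * theta n l) * PS_derive (alpha_mod n r) k) (n - 1))).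
  - apply is_pseries_unique, is_pseries_sum.
    intros r. apply ex_pseries_derive, CV_radius_alpha_mod, Hx.
  - intros k. unfold PS_derive. rewrite alpha_trig_split by assumption.
    rewrite scal_sum. apply sum_eq; intros; ring.
Qed.

End TrigSplit.

Lemma sum_normF_sqr n x : (1 <= n)%nat -> Rabs x < 1 ->
  sum_f_R0 (fun l => ReF (theta n (S l)) x ^ 2 + ImF (theta n (S l)) x ^ 2) (n - 1)
  = INR n * sum_f_R0 (fun r => Gres n r x * Gres n r x) (n - 1).
Proof.
  intros Hn Hx. rewrite <- parseval_theta by exact Hn. apply sum_eq. intros l _.
  unfold ReF, ImF, cos_coef, sin_coef.
  rewrite (PSeries_alpha_trig cos), (PSeries_alpha_trig sin); auto using cos_period, sin_period.
  ring.
Qed.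

Lemma sum_normF_deriv n x : (1 <= n)%nat -> Rabs x < 1 ->
  sum_f_R0 (fun l => ReF (theta n (S l)) x * ReF' (theta n (S l)) x
                   + ImF (theta n (S l)) x * ImF' (theta n (S l)) x) (n - 1)
  = INR n * sum_f_R0 (fun r => Gres n r x * Gres' n r x) (n - 1).
Proof.
  intros Hn Hx. rewrite <- parseval_theta by exact Hn. apply sum_eq. intros l _.
  unfold ReF, ImF, ReF', ImF', cos_coef, sin_coef.
  rewrite (PSeries_alpha_trig cos), (PSeries_alpha_trig sin),
    (PSeries_derive_alpha_trig cos), (PSeries_derive_alpha_trig sin);
    auto using cos_period, sin_period.
Qed.

Lemma H_sum n x : H n x = sum_f_R0 (fun l => hterm (cos (theta n (S l))) x) (n - 1).
Proof.
  unfold H, sum_f. apply sum_eq. intros l _.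
  replace (l + 1)%nat with (S l) by lia. reflexivity.
Qed.

Lemma H_lt1 n x : (1 <= n)%nat -> Rabs x < 1 ->
  H n x = INR n * (sum_f_R0 (fun r => Gres n r x * Gres n r x) (n - 1)
                   + 2 * x * sum_f_R0 (fun r => Gres n r x * Gres' n r x) (n - 1)).
Proof.
  intros Hn Hx. rewrite H_sum.
  erewrite sum_eq by (intros; apply hterm_lt1, Hx).
  rewrite sum_f_R0_lin, sum_normF_sqr, sum_normF_deriv by assumption. ring.
Qed.

Lemma H_gt1 n x : (1 <= n)%nat -> 1 < x ->
  H n x = - 2 * INR n * ((/ x) ^ 2 * sum_f_R0 (fun r => Gres n r (/ x) * Gres' n r (/ x)) (n - 1)).
Proof.
  intros Hn Hx.
  assert (Hy : Rabs (/ x) < 1).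
  { rewrite Rabs_pos_eq by (left; apply Rinv_0_lt_compat; lra).
    rewrite <- Rinv_1. apply Rinv_lt_contravar; lra. }
  rewrite H_sum. erewrite sum_eq by (intros; apply hterm_gt1, Hx).
  rewrite sum_f_R0_mult_l, sum_normF_deriv by assumption. ring.
Qed.

(** * Monotonicity *)

Lemma PS_derive_alpha_mod_nonneg n r k : 0 <= PS_derive (alpha_mod n r) k.
Proof. apply Rmult_le_pos; [apply pos_INR | apply alpha_mod_bounds]. Qed.

Lemma Gres_mono n r x y : 0 <= x <= y -> y < 1 ->
  0 <= Gres n r x <= Gres n r y /\ 0 <= Gres' n r x <= Gres' n r y.
Proof.
  intros Hxy Hy.
  assert (Hx1 : Rabs x < 1) by (rewrite Rabs_pos_eq; lra).
  assert (Hy1 : Rabs y < 1) by (rewrite Rabs_pos_eq; lra).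
  pose proof (fun k => proj1 (alpha_mod_bounds n r k)) as Ha.
  pose proof (PS_derive_alpha_mod_nonneg n r) as Hd.
  unfold Gres, Gres'. repeat split.
  - apply PSeries_nonneg; [auto | lra | apply CV_radius_inside, CV_radius_alpha_mod, Hx1].
  - apply PSeries_le_of_nonneg; [auto | lra | apply CV_radius_inside, CV_radius_alpha_mod, Hy1].
  - apply PSeries_nonneg; [auto | lra | apply ex_pseries_derive, CV_radius_alpha_mod, Hx1].
  - apply PSeries_le_of_nonneg; [auto | lra | apply ex_pseries_derive, CV_radius_alpha_mod, Hy1].
Qed.

(* [Gres n 0] has the constant term [alpha 0 = 1], [Gres' n 0] the term [n alpha n x^(n-1)]. *)
Lemma Gres_Gres'_0_pos n x : (1 <= n)%nat -> 0 < x < 1 -> 0 < Gres n O x * Gres' n O x.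
Proof.
  intros Hn Hx.
  assert (Hx1 : Rabs x < 1) by (rewrite Rabs_pos_eq; lra).
  pose proof (fun k => proj1 (alpha_mod_bounds n O k)) as Ha.
  assert (HG : 1 <= Gres n O x).
  { unfold Gres. eapply Rle_trans; [|apply (PSeries_ge_term _ _ O)]; auto; [|lra|].
    - unfold alpha_mod. rewrite Nat.Div0.mod_0_l. simpl. lra.
    - apply CV_radius_inside, CV_radius_alpha_mod, Hx1. }
  assert (HG' : 0 < Gres' n O x).
  { unfold Gres'. eapply Rlt_le_trans; [|apply (PSeries_ge_term _ _ (pred n))].
    - apply Rmult_lt_0_compat; [|apply pow_lt; lra].
      unfold PS_derive, alpha_mod. replace (S (pred n)) with n by lia.
      rewrite Nat.Div0.mod_same. simpl.
      apply Rmult_lt_0_compat; [apply lt_0_INR; lia | apply alpha_bounds].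
    - apply PS_derive_alpha_mod_nonneg.
    - lra.
    - apply ex_pseries_derive, CV_radius_alpha_mod, Hx1. }
  nra.
Qed.

Lemma sum_Gres_Gres'_mono n x y : 0 <= x <= y -> y < 1 ->
  0 <= sum_f_R0 (fun r => Gres n r x * Gres' n r x) (n - 1)
     <= sum_f_R0 (fun r => Gres n r y * Gres' n r y) (n - 1).
Proof.
  intros Hxy Hy. split.
  - apply cond_pos_sum. intros r.
    destruct (Gres_mono n r x x) as [[? _] [? _]]; try lra. nra.
  - apply sum_Rle. intros r _.
    destruct (Gres_mono n r x y) as [[? ?] [? ?]]; auto. apply Rmult_le_compat; lra.
Qed.

Lemma sum_Gres_Gres'_pos n y : (1 <= n)%nat -> 0 < y < 1 ->
  0 < sum_f_R0 (fun r => Gres n r y * Gres' n r y) (n - 1).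
Proof.
  intros Hn Hy. eapply Rlt_le_trans; [apply (Gres_Gres'_0_pos n y Hn Hy)|].
  apply (sum_f_R0_ge_first (fun r => Gres n r y * Gres' n r y)). intros r.
  destruct (Gres_mono n r y y) as [[? _] [? _]]; try lra. nra.
Qed.

Lemma sum_Gres_sqr_mono n x y : 0 <= x <= y -> y < 1 ->
  sum_f_R0 (fun r => Gres n r x * Gres n r x) (n - 1)
  <= sum_f_R0 (fun r => Gres n r y * Gres n r y) (n - 1).
Proof.
  intros Hxy Hy. apply sum_Rle. intros r _.
  destruct (Gres_mono n r x y) as [[? ?] _]; auto. apply Rmult_le_compat; lra.
Qed.

Lemma H_increasing_lt1 n x y : (1 <= n)%nat -> 0 <= x -> x < y -> y < 1 -> H n x < H n y.
Proof.
  intros Hn Hx Hxy Hy.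
  assert (Hn0 : 0 < INR n) by (apply lt_0_INR; lia).
  rewrite !H_lt1 by (auto; rewrite Rabs_pos_eq; lra).
  apply Rmult_lt_compat_l; [exact Hn0|].
  pose proof (sum_Gres_sqr_mono n x y ltac:(lra) Hy).
  pose proof (sum_Gres_Gres'_mono n x y ltac:(lra) Hy).
  pose proof (sum_Gres_Gres'_pos n y Hn ltac:(lra)).
  nra.
Qed.

Lemma H_increasing_gt1 n x y : (1 <= n)%nat -> 1 < x -> x < y -> H n x < H n y.
Proof.
  intros Hn Hx Hxy.
  assert (Hn0 : 0 < INR n) by (apply lt_0_INR; lia).
  rewrite !H_gt1 by (auto; lra).
  assert (Hvu : 0 < / y < / x) by (split; [apply Rinv_0_lt_compat | apply Rinv_lt_contravar]; nra).
  assert (Hu : / x < 1) by (rewrite <- Rinv_1; apply Rinv_lt_contravar; lra).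
  pose proof (sum_Gres_Gres'_mono n (/ y) (/ x) ltac:(lra) Hu).
  pose proof (sum_Gres_Gres'_pos n (/ x) Hn ltac:(lra)).
  set (Sv := sum_f_R0 (fun r => Gres n r (/ y) * Gres' n r (/ y)) (n - 1)) in *.
  set (Su := sum_f_R0 (fun r => Gres n r (/ x) * Gres' n r (/ x)) (n - 1)) in *.
  assert (Hsq : (/ y) ^ 2 < (/ x) ^ 2) by nra.
  assert ((/ y) ^ 2 * Sv <= (/ y) ^ 2 * Su) by (apply Rmult_le_compat_l; [apply pow2_ge_0 | lra]).
  assert ((/ y) ^ 2 * Su < (/ x) ^ 2 * Su) by (apply Rmult_lt_compat_r; lra).
  nra.
Qed.

(** * Behaviour near [1] and at infinity *)

Lemma hterm_abs_le c x : -1 <= c <= 1 -> 0 < qd c x -> Rabs (hterm c x) <= / qd c x.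
Proof.
  intros Hc Hq. unfold hterm. rewrite Rpower_3_2 by exact Hq.
  pose proof (sqrt_lt_R0 _ Hq) as Hs.
  assert (Hnum : Rabs (1 - x * c) <= sqrt (qd c x)).
  { rewrite <- sqrt_Rsqr_abs. apply sqrt_le_1_alt. unfold Rsqr, qd.
    assert (0 <= x ^ 2 * (1 - c ^ 2)) by (apply Rmult_le_pos; nra). nra. }
  unfold Rdiv. rewrite Rabs_mult, Rabs_inv, (Rabs_pos_eq (qd c x * sqrt (qd c x))) by nra.
  apply (Rmult_le_reg_r (qd c x * sqrt (qd c x))); [nra|].
  rewrite Rmult_assoc, Rinv_l by nra.
  replace (/ qd c x * (qd c x * sqrt (qd c x))) with (sqrt (qd c x)) by (field; lra).
  lra.
Qed.

Lemma hterm_nonneg c x : -1 <= c <= 1 -> 0 <= x < 1 -> 0 <= hterm c x.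
Proof.
  intros Hc Hx.
  assert (Hq : 0 < qd c x) by (apply qd_pos; [|rewrite Rabs_pos_eq]; lra).
  unfold hterm. rewrite Rpower_3_2 by exact Hq.
  apply Rdiv_le_0_compat; [nra|]. apply Rmult_lt_0_compat; [|apply sqrt_lt_R0]; exact Hq.
Qed.

Lemma hterm_gt1_le c x : -1 <= c < 1 -> 1 <= x -> hterm c x <= / (2 * (1 - c)).
Proof.
  intros Hc Hx.
  assert (Hq : 2 * (1 - c) <= qd c x) by (unfold qd; nra).
  eapply Rle_trans; [apply Rle_abs|]. eapply Rle_trans; [apply hterm_abs_le; lra|].
  apply Rinv_le_contravar; lra.
Qed.

Lemma hterm_gt1_abs_le c x : -1 <= c <= 1 -> 1 < x -> Rabs (hterm c x) <= / (x - 1) ^ 2.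
Proof.
  intros Hc Hx.
  assert (Hq : (x - 1) ^ 2 <= qd c x)
    by (replace ((x - 1) ^ 2) with ((1 - Rabs x) ^ 2) by (rewrite Rabs_pos_eq; [ring | lra]);
        apply qd_ge, Hc).
  assert (0 < (x - 1) ^ 2) by (apply pow_lt; lra).
  eapply Rle_trans; [apply hterm_abs_le; lra|]. apply Rinv_le_contravar; lra.
Qed.

Lemma hterm_one_lt1 x : x < 1 -> hterm 1 x = / (1 - x) ^ 2.
Proof.
  intros Hx. unfold hterm.
  replace (qd 1 x) with (Rsqr (1 - x)) by (unfold Rsqr, qd; ring).
  rewrite Rpower_3_2 by (apply Rlt_0_sqr; lra). rewrite sqrt_Rsqr by lra.
  unfold Rsqr. field. lra.
Qed.

Lemma hterm_one_gt1 x : 1 < x -> hterm 1 x = - / (x - 1) ^ 2.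
Proof.
  intros Hx. unfold hterm.
  replace (qd 1 x) with (Rsqr (x - 1)) by (unfold Rsqr, qd; ring).
  rewrite Rpower_3_2 by (apply Rlt_0_sqr; lra). rewrite sqrt_Rsqr by lra.
  unfold Rsqr. field. lra.
Qed.

Lemma cos_theta_last n : (1 <= n)%nat -> cos (theta n (S (n - 1))) = 1.
Proof.
  intros Hn. assert (Hn0 : 0 < INR n) by (apply lt_0_INR; lia).
  unfold theta. replace (S (n - 1)) with n by lia.
  replace (2 * PI * INR n / INR n) with (2 * PI) by (field; lra). apply cos_2PI.
Qed.

Lemma cos_theta_lt1 n l : (0 < l < n)%nat -> cos (theta n l) < 1.
Proof.
  intros Hl. assert (Hn0 : 0 < INR n) by (apply lt_0_INR; lia).
  assert (0 < INR l < INR n) by (split; [apply lt_0_INR | apply lt_INR]; lia).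
  pose proof PI_RGT_0.
  replace (theta n l) with (2 * (PI * INR l / INR n)) by (unfold theta; field; lra).
  rewrite cos_2a_sin.
  assert (0 < sin (PI * INR l / INR n)).
  { apply sin_gt_0; [apply Rdiv_lt_0_compat; nra|].
    apply (Rmult_lt_reg_r (INR n)); auto. unfold Rdiv. rewrite Rmult_assoc, Rinv_l by lra. nra. }
  nra.
Qed.

Lemma H_lt1_ge n x : (1 <= n)%nat -> 0 <= x < 1 -> / (1 - x) ^ 2 <= H n x.
Proof.
  intros Hn Hx. rewrite H_sum, <- hterm_one_lt1 by lra.
  pose proof (sum_f_R0_le_but_last (fun _ => 0) (fun l => hterm (cos (theta n (S l))) x) (n - 1)
    (fun l _ => hterm_nonneg _ x (COS_bound _) Hx)) as Hle.
  cbv beta in Hle. rewrite sum_cte, cos_theta_last in Hle by exact Hn. lra.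
Qed.

Lemma H_gt1_le n : (1 <= n)%nat -> exists K, forall x, 1 < x -> H n x <= K - / (x - 1) ^ 2.
Proof.
  intros Hn.
  set (b := fun l => / (2 * (1 - cos (theta n (S l))))).
  exists (sum_f_R0 b (n - 1) - b (n - 1)%nat). intros x Hx.
  rewrite H_sum. pose proof (hterm_one_gt1 x Hx).
  pose proof (sum_f_R0_le_but_last (fun l => hterm (cos (theta n (S l))) x) b (n - 1)%nat) as Hle.
  cbv beta in Hle. rewrite cos_theta_last in Hle by exact Hn.
  enough (sum_f_R0 (fun l => hterm (cos (theta n (S l))) x) (n - 1) - hterm 1 x
          <= sum_f_R0 b (n - 1) - b (n - 1)%nat) by lra.
  apply Hle. intros l Hl. apply hterm_gt1_le; [|lra].
  split; [apply COS_bound | apply cos_theta_lt1; lia].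
Qed.

Lemma H_gt1_abs_le n x : (1 <= n)%nat -> 1 < x -> Rabs (H n x) <= INR n / (x - 1) ^ 2.
Proof.
  intros Hn Hx. rewrite H_sum.
  eapply Rle_trans; [apply Rsum_abs|].
  eapply Rle_trans; [apply (sum_Rle _ (fun _ => / (x - 1) ^ 2))|].
  - intros l _. apply hterm_gt1_abs_le, Hx. apply COS_bound.
  - rewrite sum_cte. replace (S (n - 1)) with n by lia. unfold Rdiv. lra.
Qed.

Lemma k_lt_of_H_lt n x y : (1 <= n)%nat -> H n x < H n y -> k n x < k n y.
Proof.
  intros Hn Hxy. assert (Hn0 : 0 < INR n) by (apply lt_0_INR; lia).
  unfold k. apply Rplus_lt_compat_r, Rmult_lt_compat_r; [apply Rinv_0_lt_compat|]; assumption.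
Qed.

Lemma k_0 n : (1 <= n)%nat -> k n 0 = 0.
Proof.
  intros Hn. assert (Hn0 : 0 < INR n) by (apply lt_0_INR; lia).
  unfold k. rewrite H_sum, (sum_eq _ (fun _ => 1)), sum_cte.
  - replace (S (n - 1)) with n by lia. field. lra.
  - intros l _. unfold hterm, qd. replace (1 + 0 ^ 2 - 2 * 0 * cos (theta n (S l))) with 1 by ring.
    rewrite Rpower_3_2, sqrt_1 by lra. field.
Qed.

Lemma k_at_left_1 n : (1 <= n)%nat -> filterlim (k n) (at_left 1) (Rbar_locally p_infty).
Proof.
  intros Hn. assert (Hn0 : 0 < INR n) by (apply lt_0_INR; lia).
  apply (filterlim_ge_p_infty (fun x => / (x - 1) ^ 2 / INR n - 1)).
  - exists (mkposreal 1 Rlt_0_1). intros x Hx Hx1.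
    change (Rabs (x - 1) < 1) in Hx. apply Rabs_def2 in Hx.
    pose proof (H_lt1_ge n x Hn ltac:(lra)).
    replace ((x - 1) ^ 2) with ((1 - x) ^ 2) by ring.
    unfold k, Rminus, Rdiv. apply Rplus_le_compat_r, Rmult_le_compat_r; [left; apply Rinv_0_lt_compat|]; assumption.
  - eapply filterlim_filter_le_1; [apply filter_le_within_locally'; intros; lra|].
    apply filterlim_inv_sqr; assumption.
Qed.

Lemma k_at_right_1 n : (1 <= n)%nat -> filterlim (k n) (at_right 1) (Rbar_locally m_infty).
Proof.
  intros Hn. assert (Hn0 : 0 < INR n) by (apply lt_0_INR; lia).
  destruct (H_gt1_le n Hn) as [K HK].
  apply (filterlim_le_m_infty (fun x => - (/ (x - 1) ^ 2 / INR n - (K / INR n - 1)))).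
  - exists (mkposreal 1 Rlt_0_1). intros x _ Hx1.
    pose proof (HK x Hx1).
    replace (- (/ (x - 1) ^ 2 / INR n - (K / INR n - 1))) with ((K - / (x - 1) ^ 2) / INR n - 1)
      by (field; split; try lra; apply pow_nonzero; lra).
    unfold k, Rminus, Rdiv. apply Rplus_le_compat_r, Rmult_le_compat_r; [left; apply Rinv_0_lt_compat|]; assumption.
  - apply (filterlim_comp _ _ _ _ Ropp _ (Rbar_locally p_infty)); [|apply (filterlim_Rbar_opp p_infty)].
    eapply filterlim_filter_le_1; [apply filter_le_within_locally'; intros; lra|].
    apply filterlim_inv_sqr; assumption.
Qed.

Lemma k_at_p_infty n : (1 <= n)%nat -> filterlim (k n) (Rbar_locally p_infty) (locally (-1)).
Proof.
  intros Hn. assert (Hn0 : 0 < INR n) by (apply lt_0_INR; lia).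
  apply filterlim_p_infty_of_inv_sqr_bound. intros x Hx.
  unfold k. replace (H n x / INR n - 1 - -1) with (H n x / INR n) by ring.
  unfold Rdiv. rewrite Rabs_mult, (Rabs_pos_eq (/ INR n)) by (left; apply Rinv_0_lt_compat; lra).
  pose proof (H_gt1_abs_le n x Hn Hx). unfold Rdiv in *.
  apply (Rmult_le_reg_r (INR n)); [lra|].
  rewrite Rmult_assoc, Rinv_l by lra. lra.
Qed.

Theorem lemma1 (n : nat) (hn : (1 <= n)%nat) :
  k n 0 = 0 /\
  (forall x y : R, 0 <= x -> x < y -> y < 1 -> k n x < k n y) /\
  (forall x y : R, 1 < x -> x < y -> k n x < k n y) /\
  filterlim (k n) (at_left 1) (Rbar_locally p_infty) /\
  filterlim (k n) (at_right 1) (Rbar_locally m_infty) /\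
  filterlim (k n) (Rbar_locally p_infty) (locally (-1)).
Proof.
  split; [apply k_0, hn|].
  split; [intros x y Hx Hxy Hy; apply k_lt_of_H_lt, H_increasing_lt1; assumption|].
  split; [intros x y Hx Hxy; apply k_lt_of_H_lt, H_increasing_gt1; assumption|].
  split; [apply k_at_left_1, hn|].
  split; [apply k_at_right_1, hn | apply k_at_p_infty, hn].
Qed.
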